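(* If $\mathcal F_1$ and $\mathcal F_2$ are distributive forest algebras (finite or infinite), then $\mathcal F_1\wr\mathcal F_2$ is 2-distributive.
   Context: A forest algebra is a pair $(H,V)$ where $H$ is a monoid written additively, $V$ is a monoid written multiplicatively, and $V$ acts faithfully on $H$. For each $h$ there is $I_h\in V$ with $I_h h'=h+h'$, and each $h$ is of the form $v\cdot 0_H$. All forest algebras are horizontally commutative and idempotent ($h_1+h_2=h_2+h_1$, $h+h=h$). Morphisms preserve the monoid operations, the action and $h\mapsto I_h$. The free forest algebra $\Sigma^\Delta=(H_\Sigma,V_\Sigma)$ has as forest part the finite sets of unordered trees $\alpha[C]$ (with $\alpha\in\Sigma$ and $C$ a finite set of trees), under union. Its contexts are forests with one leaf replaced by a hole, acting by substitution. $\pi(f)$ is the prefix-closed set of root-starting (not necessarily maximal) label paths of a forest $f$. $(H,V)$ is distributive if $v(h_1+h_2)=vh_1+vh_2$ for all $v,h_1,h_2$. It is 2-distributive if for every finite alphabet $\Sigma$, every morphism $\phi:\Sigma^\Delta\to(H,V)$, every context $v$, and all forests $f_1,f_2$ with $\pi(f_1)=\pi(f_2)$, we have $\phi(v(f_1+f_2))=\phi(vf_1+vf_2)$. Wreath product: $(H_1,V_1)\wr(H_2,V_2)=(H_1\times H_2,\ V_1^{H_2}\times V_2)$. The action is $(f,v)(h_1,h_2)=(f(h_2)h_1,\ vh_2)$. Multiplication is $(f,v)(f',v')=(f'',vv')$ with $f''(h)=f(v'h)\cdot f'(h)$. $H_1\times H_2$ carries the direct product structure. *)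

From mathcomp Require Import all_boot.

Record FAops := {
  fH : Type;
  fV : Type;
  fzero : fH;
  fadd : fH -> fH -> fH;
  fone : fV;
  fmul : fV -> fV -> fV;
  fact : fV -> fH -> fH;
  fI : fH -> fV
}.

(* The axioms of a (horizontally commutative and idempotent) forest algebra. *)
Definition forest_algebra (F : FAops) : Prop :=
  (forall a b c : fH F, fadd F a (fadd F b c) = fadd F (fadd F a b) c) /\
  (forall a : fH F, fadd F (fzero F) a = a) /\
  (forall a : fH F, fadd F a (fzero F) = a) /\
  (forall u v w : fV F, fmul F u (fmul F v w) = fmul F (fmul F u v) w) /\
  (forall v : fV F, fmul F (fone F) v = v) /\
  (forall v : fV F, fmul F v (fone F) = v) /\
  (forall (v w : fV F) (h : fH F), fact F (fmul F v w) h = fact F v (fact F w h)) /\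
  (forall h : fH F, fact F (fone F) h = h) /\
  (forall v w : fV F, (forall h, fact F v h = fact F w h) -> v = w) /\
  (forall h h' : fH F, fact F (fI F h) h' = fadd F h h') /\
  (forall h : fH F, exists v, h = fact F v (fzero F)) /\
  (forall a b : fH F, fadd F a b = fadd F b a) /\
  (forall a : fH F, fadd F a a = a).

Definition distributive (F : FAops) : Prop :=
  forall (v : fV F) (h1 h2 : fH F),
    fact F v (fadd F h1 h2) = fadd F (fact F v h1) (fact F v h2).

(* Representatives: ordered rose trees / lists; forests are identified *)
(* as finite sets of unordered trees via [feq].                        *)

Set Implicit Arguments.
Unset Strict Implicit.
Unset Printing Implicit Defensive.

Inductive tree (Sigma : Type) : Type :=
  Node : Sigma -> seq (tree Sigma) -> tree Sigma.

Definition forest (Sigma : Type) := seq (tree Sigma).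

Section Free.
Variable Sigma : eqType.

(* equality of trees as hereditarily finite labelled sets:
   alpha[C] = beta[D] iff alpha = beta and C = D as sets of trees *)
Fixpoint teq (t u : tree Sigma) {struct t} : bool :=
  match t, u with
  | Node a ts, Node b us =>
      (a == b)
      && all (fun t' => has (teq t') us) ts
      && all (fun u' => has (fun t' => teq t' u') ts) us
  end.

Definition feq (f g : forest Sigma) : bool :=
  all (fun t => has (teq t) g) f && all (fun u => has (fun t => teq t u) f) g.

(* Contexts: CHole f = f + [], CNode f a c = f + a[c]. *)
Inductive ctx : Type :=
  | CHole : forest Sigma -> ctx
  | CNode : forest Sigma -> Sigma -> ctx -> ctx.

Fixpoint subst (v : ctx) (g : forest Sigma) : forest Sigma :=
  match v with
  | CHole f => f ++ g
  | CNode f a c => f ++ [:: Node a (subst c g)]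
  end.

Definition cprepend (f : forest Sigma) (w : ctx) : ctx :=
  match w with
  | CHole f' => CHole (f ++ f')
  | CNode f' a c => CNode (f ++ f') a c
  end.

Fixpoint comp (v w : ctx) : ctx :=
  match v with
  | CHole f => cprepend f w
  | CNode f a c => CNode f a (comp c w)
  end.

Definition cid : ctx := CHole [::].

(* equality of contexts (the free forest algebra acts faithfully) *)
Definition ceq (v w : ctx) : Prop :=
  forall g, feq (subst v g) (subst w g).

(* pi(f): root-starting label paths of f (prefix closed) *)
Fixpoint inpi (f : forest Sigma) (p : seq Sigma) {struct p} : bool :=
  match p with
  | [::] => true
  | a :: p' => has (fun t => match t with Node b ts => (b == a) && inpi ts p' end) f
  end.

Definition pi_eq (f1 f2 : forest Sigma) : Prop :=
  forall p, inpi f1 p = inpi f2 p.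

End Free.

Arguments CHole {Sigma}.
Arguments CNode {Sigma}.
Arguments cid {Sigma}.

(* A morphism from the free forest algebra over Sigma to F, given by its
   action on representatives; it must be well defined on the free algebra
   (invariant under [feq]/[ceq]) and preserve all the structure. *)
Definition free_morphism (Sigma : eqType) (F : FAops)
    (phiH : forest Sigma -> fH F) (phiV : ctx Sigma -> fV F) : Prop :=
  (forall f g, feq f g -> phiH f = phiH g) /\
  (forall v w, ceq v w -> phiV v = phiV w) /\
  phiH [::] = fzero F /\
  (forall f g, phiH (f ++ g) = fadd F (phiH f) (phiH g)) /\
  phiV cid = fone F /\
  (forall v w, phiV (comp v w) = fmul F (phiV v) (phiV w)) /\
  (forall v f, phiH (subst v f) = fact F (phiV v) (phiH f)) /\
  (forall f, phiV (CHole f) = fI F (phiH f)).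

Definition two_distributive (F : FAops) : Prop :=
  forall (Sigma : finType) (phiH : forest Sigma -> fH F) (phiV : ctx Sigma -> fV F),
    free_morphism phiH phiV ->
    forall (v : ctx Sigma) (f1 f2 : forest Sigma),
      pi_eq f1 f2 ->
      phiH (subst v (f1 ++ f2)) = phiH (subst v f1 ++ subst v f2).

Definition wreath (F1 F2 : FAops) : FAops := {|
  fH := (fH F1 * fH F2)%type;
  fV := ((fH F2 -> fV F1) * fV F2)%type;
  fzero := (fzero F1, fzero F2);
  fadd := fun a b => (fadd F1 a.1 b.1, fadd F2 a.2 b.2);
  fone := (fun _ => fone F1, fone F2);
  fmul := fun x y => (fun h => fmul F1 (x.1 (fact F2 y.2 h)) (y.1 h), fmul F2 x.2 y.2);
  fact := fun x h => (fact F1 (x.1 h.2) h.1, fact F2 x.2 h.2);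
  fI := fun h => (fun _ => fI F1 h.1, fI F2 h.2)
|}.

From mathcomp Require Import all_boot.

(* In a wreath product the action reads [(f, v) (h1, h2) = (f h2 h1, v h2)],
   so distributivity of [F1] gives [x (h + h') = x h + x h'] whenever [h] and
   [h'] have the same [F2]-component.  For forests with the same path set this
   is always the case: the order [x <= y <-> x + y = y] of the semilattice
   [H2] is preserved by the letter contexts [a[_]] (they distribute over [+]),
   and an induction on trees shows that [pi(f) ⊆ pi(g)] forces the image of
   [f] below the image of [g]. *)

Set Implicit Arguments.
Unset Strict Implicit.

Lemma forest_ind (Sigma : Type) (P : forest Sigma -> Prop) :
  P [::] -> (forall a ts f, P ts -> P f -> P (Node a ts :: f)) -> forall f, P f.
Proof.
move=> P0 PN.
have P_cons : forall t f, P f -> P (t :: f).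
  fix IH 1 => -[a ts] f Pf; apply: PN Pf.
  by elim: ts => [|t ts IHts]; [exact: P0 | exact: IH].
by elim=> [|t f]; [exact: P0 | exact: P_cons].
Qed.

Section PathSets.
Variable Sigma : eqType.

Lemma inpi_cat (f g : forest Sigma) p : inpi (f ++ g) p = inpi f p || inpi g p.
Proof. by case: p => [|a p] //=; rewrite has_cat. Qed.

Fixpoint children (a : Sigma) (g : forest Sigma) : forest Sigma :=
  match g with
  | [::] => [::]
  | Node b us :: g' => if b == a then us ++ children a g' else children a g'
  end.

Lemma inpi_node_cons (c a : Sigma) us g p :
  inpi (Node c us :: g) (a :: p) = ((c == a) && inpi us p) || inpi g (a :: p).
Proof. by []. Qed.

Lemma inpi_children (a : Sigma) g p :
  inpi (children a g) p = inpi g (a :: p) || (p == [::]).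
Proof.
case: p => [|b p]; first by rewrite orbT.
rewrite orbF; elim: g => [|[c us] g IH] //.
rewrite inpi_node_cons -IH {1}/children -/children.
by case: (c == a); rewrite ?inpi_cat.
Qed.

Lemma children_nil a g : ~~ inpi g [:: a] -> children a g = [::].
Proof. by elim: g => [|[c us] g IH] //=; case: (c == a). Qed.

End PathSets.

Section SemilatticeValuation.
Variables (Sigma : eqType) (H : Type) (zero : H) (add : H -> H -> H).
Variables (letter : Sigma -> H -> H) (phi : forest Sigma -> H).
Hypothesis addA : forall x y z, add x (add y z) = add (add x y) z.
Hypothesis addC : forall x y, add x y = add y x.
Hypothesis addxx : forall x, add x x = x.
Hypothesis addx0 : forall x, add x zero = x.
Hypothesis letterD : forall a x y, letter a (add x y) = add (letter a x) (letter a y).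
Hypothesis phi_nil : phi [::] = zero.
Hypothesis phi_cat : forall f g, phi (f ++ g) = add (phi f) (phi g).
Hypothesis phi_node : forall a ts, phi [:: Node a ts] = letter a (phi ts).

Definition leJ x y := add x y = y.

Lemma leJ_trans x y z : leJ x y -> leJ y z -> leJ x z.
Proof. by rewrite /leJ => xy <-; rewrite addA xy. Qed.

Lemma leJ_addl x y : leJ x (add x y).
Proof. by rewrite /leJ addA addxx. Qed.

Lemma leJ_addr x y z : leJ x y -> leJ x (add z y).
Proof. by rewrite /leJ => xy; rewrite addA (addC x) -addA xy. Qed.

Lemma leJ_add x y z : leJ x z -> leJ y z -> leJ (add x y) z.
Proof. by rewrite /leJ => xz yz; rewrite -addA yz xz. Qed.

Lemma leJ_anti x y : leJ x y -> leJ y x -> x = y.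
Proof. by rewrite /leJ => xy yx; rewrite -xy addC yx. Qed.

Lemma leJ_letter a x y : leJ x y -> leJ (letter a x) (letter a y).
Proof. by rewrite /leJ -letterD => ->. Qed.

Lemma phi_cons t f : phi (t :: f) = add (phi [:: t]) (phi f).
Proof. by rewrite -phi_cat. Qed.

Lemma letter_children_le a g :
  inpi g [:: a] -> leJ (letter a (phi (children a g))) (phi g).
Proof.
elim: g => [|[c us] g IH] //=; rewrite phi_cons phi_node.
case: eqP => [->|_] /= ga; last exact/leJ_addr/IH.
case: (boolP (inpi g [:: a])) => [/IH gle|/children_nil ->].
  by rewrite phi_cat letterD; apply: leJ_add; [apply: leJ_addl | apply: leJ_addr].
by rewrite cats0; apply: leJ_addl.
Qed.

Lemma phi_le_inpi f g :
  (forall p, inpi f p -> inpi g p) -> leJ (phi f) (phi g).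
Proof.
elim/forest_ind: f g => [|a ts f IHts IHf] g fg.
  by rewrite phi_nil /leJ addC addx0.
rewrite phi_cons phi_node; apply: leJ_add; last first.
  by apply: IHf => p fp; apply: fg; rewrite -cat1s inpi_cat fp orbT.
have ga : inpi g [:: a] by apply: fg; rewrite inpi_node_cons eqxx.
apply: leJ_trans (letter_children_le ga); apply/leJ_letter/IHts => p tsp.
rewrite inpi_children; apply/orP; left; apply: fg.
by rewrite inpi_node_cons eqxx tsp.
Qed.

Lemma phi_pi_eq f g : pi_eq f g -> phi f = phi g.
Proof. by move=> fg; apply: leJ_anti; apply: phi_le_inpi => p; rewrite fg. Qed.

End SemilatticeValuation.

Lemma free_morphism_pi_eq (F : FAops) (Sigma : eqType)
    (phiH : forest Sigma -> fH F) (phiV : ctx Sigma -> fV F) f g :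
  forest_algebra F -> distributive F -> free_morphism phiH phiV ->
  pi_eq f g -> phiH f = phiH g.
Proof.
move=> [addA [_ [addx0 [_ [_ [_ [_ [_ [_ [_ [_ [addC addxx]]]]]]]]]]]] distF.
move=> [_ [_ [phi_nil [phi_cat [_ [_ [phi_subst _]]]]]]].
apply: (phi_pi_eq addA addC addxx addx0
  (letter := fun a => fact F (phiV (CNode [::] a cid)))) => // a ts.
by rewrite -phi_subst.
Qed.

Lemma free_morphism_wreath_snd (F1 F2 : FAops) (Sigma : eqType)
    (phiH : forest Sigma -> fH (wreath F1 F2))
    (phiV : ctx Sigma -> fV (wreath F1 F2)) :
  free_morphism phiH phiV ->
  free_morphism (fun f => (phiH f).2) (fun v => (phiV v).2).
Proof.
move=> [feqH [ceqV [phi_nil [phi_cat [phi_id [phi_comp [phi_subst phi_hole]]]]]]].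
split=> [f g /feqH -> // | ]; split=> [v w /ceqV -> // | ].
by do !split=> * /=; rewrite ?phi_nil ?phi_cat ?phi_id ?phi_comp ?phi_subst ?phi_hole.
Qed.

Lemma wreath_actD_eq_snd (F1 F2 : FAops) (x : fV (wreath F1 F2))
    (h h' : fH (wreath F1 F2)) :
  distributive F1 -> (forall a : fH F2, fadd F2 a a = a) -> h.2 = h'.2 ->
  fact _ x (fadd _ h h') = fadd _ (fact _ x h) (fact _ x h').
Proof.
case: h h' => [h1 h2] [h1' h2'] distF1 addxx /= <-.
by rewrite !addxx distF1.
Qed.

Theorem mainTheorem3 (F1 F2 : FAops) :
  forest_algebra F1 -> distributive F1 ->
  forest_algebra F2 -> distributive F2 ->
  two_distributive (wreath F1 F2).
Proof.
move=> _ distF1 F2fa distF2 Sigma phiH phiV phi_mor v f1 f2 pi12.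
have same_snd : (phiH f1).2 = (phiH f2).2.
  exact: free_morphism_pi_eq F2fa distF2 (free_morphism_wreath_snd phi_mor) pi12.
have addxx2 : forall a : fH F2, fadd F2 a a = a.
  by case: F2fa => [_ [_ [_ [_ [_ [_ [_ [_ [_ [_ [_ [_ addxx]]]]]]]]]]]].
case: phi_mor => _ [_ [_ [phi_cat [_ [_ [phi_subst _]]]]]].
by rewrite phi_subst !phi_cat !phi_subst wreath_actD_eq_snd.
Qed.
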